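(* Let $a,b,p,q$ be positive real numbers and consider the system of difference equations $$y_{n+1}=\frac{a z_n}{p+z_n}e^{-y_n},\qquad z_{n+1}=\frac{b y_n}{q+y_n}e^{-z_n},\qquad n=0,1,2,\dots$$ with nonnegative initial values. (i) If $\frac{a}{p}<1$ and $\frac{b}{q}<1$, then the equilibrium $(0,0)$ is locally asymptotically stable. (ii) Suppose $ab>pq$, so that the system has a unique positive equilibrium $(\bar y,\bar z)$. Define $$y^*=\frac{ab-pq}{p+b},\quad z^*=\frac{ab-pq}{q+a},\quad y_*=\frac{ab\,e^{-(y^*+z^* )}-pq}{b e^{-z^*}+p},\quad z_*=\frac{ab\,e^{-(y^*+z^* )}-pq}{a e^{-y^*}+q}.$$ If $e^{y_*}>a$ and $e^{z_*}>b$, then $(\bar y,\bar z)$ is locally asymptotically stable.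
   Context: An equilibrium $(\bar y,\bar z)$ satisfies $\bar y=\frac{a\bar z}{p+\bar z}e^{-\bar y}$, $\bar z=\frac{b\bar y}{q+\bar y}e^{-\bar z}$. It is locally stable if for every $\varepsilon>0$ there is $\delta>0$ such that $|y_0-\bar y|+|z_0-\bar z|<\delta$ implies $|y_n-\bar y|+|z_n-\bar z|<\varepsilon$ for all $n\ge0$; it is locally asymptotically stable if it is locally stable and there is $\gamma>0$ such that $|y_0-\bar y|+|z_0-\bar z|<\gamma$ implies $y_n\to\bar y$, $z_n\to\bar z$. *)

From Stdlib Require Import Reals.
Open Scope R_scope.

Definition step (a b p q : R) (s : R * R) : R * R :=
  let (y, z) := s in
  (a * z / (p + z) * exp (- y), b * y / (q + y) * exp (- z)).

Fixpoint sol (a b p q y0 z0 : R) (n : nat) : R * R :=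
  match n with
  | O => (y0, z0)
  | S k => step a b p q (sol a b p q y0 z0 k)
  end.

Definition is_equilibrium (a b p q yb zb : R) : Prop :=
  yb = a * zb / (p + zb) * exp (- yb) /\ zb = b * yb / (q + yb) * exp (- zb).

(* Local stability, for the system with nonnegative initial values. *)
Definition locally_stable (a b p q yb zb : R) : Prop :=
  forall eps, eps > 0 -> exists delta, delta > 0 /\
    forall y0 z0, 0 <= y0 -> 0 <= z0 ->
      Rabs (y0 - yb) + Rabs (z0 - zb) < delta ->
      forall n, Rabs (fst (sol a b p q y0 z0 n) - yb)
              + Rabs (snd (sol a b p q y0 z0 n) - zb) < eps.

Definition locally_asymptotically_stable (a b p q yb zb : R) : Prop :=
  locally_stable a b p q yb zb /\
  exists gamma, gamma > 0 /\
    forall y0 z0, 0 <= y0 -> 0 <= z0 ->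
      Rabs (y0 - yb) + Rabs (z0 - zb) < gamma ->
      Un_cv (fun n => fst (sol a b p q y0 z0 n)) yb /\
      Un_cv (fun n => snd (sol a b p q y0 z0 n)) zb.

From Stdlib Require Import Reals Lra.
Open Scope R_scope.

(* (i) Since z/(p+z) <= z/p and e^{-y} <= 1, the sum y_n + z_n shrinks at least by the
   factor max(a/p, b/q) < 1 at every step.
   (ii) If both relative errors |y - ybar|/ybar and |z - zbar|/zbar are at most m <= s, one
   step multiplies them by at most (p/(p + zbar (1 - s)) + ybar) e^{ybar s} (resp. the
   symmetric factor), which tends to p/(p + zbar) + ybar as s -> 0.  By the equilibrium
   equation ybar (p + zbar) = a zbar e^{-ybar}, this limit is < 1 iff e^{ybar} > a, so a
   small ball around the equilibrium is contracted geometrically.  Finally, comparing the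
   equilibrium with the exponential-free system y = a z/(p+z), z = b y/(q+y) gives
   ybar <= y^*, zbar <= z^*, and then y_* <= ybar, z_* <= zbar, so e^{y_*} > a forces
   e^{ybar} > a. *)

Lemma exp_le_compat (x y : R) : x <= y -> exp x <= exp y.
Proof. intros [h | ->]; [left; apply exp_increasing, h | apply Rle_refl]. Qed.

Lemma pow_unit_interval (k : R) (n : nat) : 0 <= k <= 1 -> 0 <= k ^ n <= 1.
Proof.
  intros hk. split; [apply pow_le; lra|].
  rewrite <- (pow1 n). apply pow_incr. lra.
Qed.

Lemma Un_cv_geometric_bound (u : nat -> R) (l K k : R) :
  0 <= K -> 0 <= k < 1 -> (forall n, Rabs (u n - l) <= K * k ^ n) -> Un_cv u l.
Proof.
  intros hK hk bound eps heps.
  destruct (pow_lt_1_zero k ltac:(rewrite Rabs_right; lra) (eps / (K + 1)))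
    as [N HN]; [apply Rdiv_lt_0_compat; lra|].
  exists N. intros n hn. unfold Rdist.
  specialize (HN n hn). rewrite Rabs_right in HN by (apply Rle_ge, pow_le; lra).
  assert (K * k ^ n <= K * (eps / (K + 1))) by (apply Rmult_le_compat_l; lra).
  assert (K * (eps / (K + 1)) < eps).
  { apply Rmult_lt_reg_r with (K + 1); [lra|]. field_simplify; lra. }
  specialize (bound n). lra.
Qed.

Lemma continuity_pt_lt_nbhd (f : R -> R) (x k : R) :
  continuity_pt f x -> f x < k ->
  exists r, 0 < r /\ forall s, Rabs (s - x) < r -> f s < k.
Proof.
  intros hf hk. destruct (hf (k - f x)) as [r [hr near]]; [lra|].
  exists r. split; [exact hr|]. intros s hs.
  destruct (Req_dec s x) as [-> | hsx]; [exact hk|].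
  assert (close : Rabs (f s - f x) < k - f x)
    by (apply (near s); split; [split; [exact I | auto] | exact hs]).
  apply Rabs_def2 in close. lra.
Qed.

Lemma exp_neg_sub1_abs_le (d : R) : Rabs (exp (- d) - 1) <= Rabs d * exp (Rabs d).
Proof.
  pose proof (exp_ineq1_le (- d)). pose proof (exp_ineq1_le d).
  assert (inv : exp d * exp (- d) = 1) by (rewrite <- exp_plus, Rplus_opp_r; apply exp_0).
  pose proof (exp_pos d). pose proof (exp_pos (- d)).
  destruct (Rle_dec 0 d) as [h | h].
  - rewrite (Rabs_right d) by lra.
    assert (exp (- d) <= 1) by (rewrite <- exp_0; apply exp_le_compat; lra).
    rewrite Rabs_left1 by lra. nra.
  - rewrite (Rabs_left d) by lra.
    assert (1 <= exp (- d)) by (rewrite <- exp_0; apply exp_le_compat; lra).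
    rewrite Rabs_right by lra. nra.
Qed.

Lemma sol_S_fst (a b p q y0 z0 : R) (n : nat) :
  fst (sol a b p q y0 z0 (S n)) =
  a * snd (sol a b p q y0 z0 n) / (p + snd (sol a b p q y0 z0 n))
    * exp (- fst (sol a b p q y0 z0 n)).
Proof. simpl. destruct (sol a b p q y0 z0 n). reflexivity. Qed.

Lemma sol_S_snd (a b p q y0 z0 : R) (n : nat) :
  snd (sol a b p q y0 z0 (S n)) =
  b * fst (sol a b p q y0 z0 n) / (q + fst (sol a b p q y0 z0 n))
    * exp (- snd (sol a b p q y0 z0 n)).
Proof. simpl. destruct (sol a b p q y0 z0 n). reflexivity. Qed.

Definition sol_dist (a b p q yb zb y0 z0 : R) (n : nat) : R :=
  Rabs (fst (sol a b p q y0 z0 n) - yb) + Rabs (snd (sol a b p q y0 z0 n) - zb).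

Lemma locally_asymptotically_stable_of_geometric_decay (a b p q yb zb C rho k : R) :
  0 <= C -> 0 < rho -> 0 <= k < 1 ->
  (forall y0 z0, 0 <= y0 -> 0 <= z0 -> Rabs (y0 - yb) + Rabs (z0 - zb) < rho ->
     forall n, sol_dist a b p q yb zb y0 z0 n
               <= C * (Rabs (y0 - yb) + Rabs (z0 - zb)) * k ^ n) ->
  locally_asymptotically_stable a b p q yb zb.
Proof.
  intros hC hrho hk decay. split.
  - intros eps heps. exists (Rmin rho (eps / (C + 1))). split.
    { apply Rmin_pos; [lra | apply Rdiv_lt_0_compat; lra]. }
    intros y0 z0 hy0 hz0 hd n.
    pose proof (Rmin_l rho (eps / (C + 1))). pose proof (Rmin_r rho (eps / (C + 1))).
    specialize (decay y0 z0 hy0 hz0 ltac:(lra) n). unfold sol_dist in decay.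
    set (d := Rabs (y0 - yb) + Rabs (z0 - zb)) in *.
    assert (hd0 : 0 <= d) by (unfold d; pose proof (Rabs_pos (y0 - yb));
                              pose proof (Rabs_pos (z0 - zb)); lra).
    destruct (pow_unit_interval k n) as [hk0 hk1]; [lra|].
    assert (C * d * k ^ n <= C * d) by (rewrite <- (Rmult_1_r (C * d)) at 2;
                                        apply Rmult_le_compat_l; nra).
    assert (C * d <= C * (eps / (C + 1))) by (apply Rmult_le_compat_l; lra).
    assert (C * (eps / (C + 1)) < eps).
    { apply Rmult_lt_reg_r with (C + 1); [lra|]. field_simplify; lra. }
    lra.
  - exists rho. split; [exact hrho|]. intros y0 z0 hy0 hz0 hd.
    set (d := Rabs (y0 - yb) + Rabs (z0 - zb)) in *.
    assert (hCd : 0 <= C * d).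
    { apply Rmult_le_pos; [exact hC|].
      unfold d. pose proof (Rabs_pos (y0 - yb)). pose proof (Rabs_pos (z0 - zb)). lra. }
    assert (coord_decay : forall n,
      Rabs (fst (sol a b p q y0 z0 n) - yb) <= C * d * k ^ n /\
      Rabs (snd (sol a b p q y0 z0 n) - zb) <= C * d * k ^ n).
    { intro n. specialize (decay y0 z0 hy0 hz0 hd n). unfold sol_dist in decay. fold d in decay.
      pose proof (Rabs_pos (fst (sol a b p q y0 z0 n) - yb)).
      pose proof (Rabs_pos (snd (sol a b p q y0 z0 n) - zb)). lra. }
    split; apply Un_cv_geometric_bound with (C * d) k; auto; intro n;
      [apply (proj1 (coord_decay n)) | apply (proj2 (coord_decay n))].
Qed.

Lemma hill_exp_bounds (a p y z : R) : 0 < a -> 0 < p -> 0 <= y -> 0 <= z ->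
  0 <= a * z / (p + z) * exp (- y) <= a / p * z.
Proof.
  intros ha hp hy hz.
  assert (exp (- y) <= 1) by (rewrite <- exp_0; apply exp_le_compat; lra).
  pose proof (exp_pos (- y)).
  assert (0 <= a * z / (p + z)) by (apply Rmult_le_pos; [nra | left; apply Rinv_0_lt_compat; lra]).
  assert (a * z / (p + z) <= a / p * z).
  { apply Rmult_le_reg_r with (p * (p + z)); [nra|].
    replace (a * z / (p + z) * (p * (p + z))) with (a * z * p) by (field; lra).
    replace (a / p * z * (p * (p + z))) with (a * z * (p + z)) by (field; lra). nra. }
  split; [apply Rmult_le_pos|]; nra.
Qed.

Lemma sol_sum_le_geometric (a b p q k y0 z0 : R) :
  0 < a -> 0 < b -> 0 < p -> 0 < q -> a / p <= k -> b / q <= k ->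
  0 <= y0 -> 0 <= z0 -> forall n,
  0 <= fst (sol a b p q y0 z0 n) /\ 0 <= snd (sol a b p q y0 z0 n) /\
  fst (sol a b p q y0 z0 n) + snd (sol a b p q y0 z0 n) <= (y0 + z0) * k ^ n.
Proof.
  intros ha hb hp hq hka hkb hy0 hz0 n.
  induction n as [|n [hy [hz hsum]]]; [simpl; lra|].
  rewrite sol_S_fst, sol_S_snd.
  set (y := fst (sol a b p q y0 z0 n)) in *. set (z := snd (sol a b p q y0 z0 n)) in *.
  destruct (hill_exp_bounds a p y z) as [hy1 hy2]; auto.
  destruct (hill_exp_bounds b q z y) as [hz1 hz2]; auto.
  assert (a / p * z <= k * z) by (apply Rmult_le_compat_r; lra).
  assert (b / q * y <= k * y) by (apply Rmult_le_compat_r; lra).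
  assert (0 <= k) by (pose proof (Rdiv_lt_0_compat a p ha hp); lra).
  assert (k * (y + z) <= k * ((y0 + z0) * k ^ n)) by (apply Rmult_le_compat_l; lra).
  simpl. lra.
Qed.

Lemma zero_locally_asymptotically_stable (a b p q : R) :
  0 < a -> 0 < b -> 0 < p -> 0 < q -> a / p < 1 -> b / q < 1 ->
  locally_asymptotically_stable a b p q 0 0.
Proof.
  intros ha hb hp hq hap hbq.
  pose proof (Rmax_l (a / p) (b / q)). pose proof (Rmax_r (a / p) (b / q)).
  set (k := Rmax (a / p) (b / q)) in *.
  pose proof (Rdiv_lt_0_compat a p ha hp).
  apply (locally_asymptotically_stable_of_geometric_decay _ _ _ _ _ _ 1 1 k); try lra.
  { split; [lra | apply Rmax_lub_lt; lra]. }
  intros y0 z0 hy0 hz0 _ n. unfold sol_dist.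
  destruct (sol_sum_le_geometric a b p q k y0 z0) with (n := n) as [hy [hz hsum]]; try lra.
  rewrite !Rminus_0_r, !Rabs_right by lra. lra.
Qed.

Lemma rel_error_lower_bound (Z z m s : R) : 0 < Z -> m <= s ->
  Rabs (z - Z) <= Z * m -> Z * (1 - s) <= z.
Proof.
  intros hZ hms hz.
  assert (Z - z <= Rabs (z - Z)) by (rewrite Rabs_minus_sym; apply RRle_abs).
  nra.
Qed.

Lemma hill_rel_error_le (p Z z m s : R) : 0 < p -> 0 < Z -> m <= s -> s < 1 ->
  Rabs (z - Z) <= Z * m -> Rabs (p * (z - Z) / (Z * (p + z))) <= p * m / (p + Z * (1 - s)).
Proof.
  intros hp hZ hms hs hz.
  pose proof (rel_error_lower_bound Z z m s hZ hms hz) as hz1.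
  unfold Rdiv. rewrite !Rabs_mult, Rabs_inv, (Rabs_right p), (Rabs_right (Z * (p + z))) by nra.
  apply Rmult_le_reg_r with (Z * (p + z) * (p + Z * (1 - s))); [apply Rmult_lt_0_compat; nra|].
  replace (p * Rabs (z - Z) * / (Z * (p + z)) * (Z * (p + z) * (p + Z * (1 - s))))
    with (p * (Rabs (z - Z) * (p + Z * (1 - s)))) by (field; nra).
  replace (p * m * / (p + Z * (1 - s)) * (Z * (p + z) * (p + Z * (1 - s))))
    with (p * (Z * m * (p + z))) by (field; nra).
  apply Rmult_le_compat_l; [lra|].
  apply Rmult_le_compat; [apply Rabs_pos | nra | exact hz | lra].
Qed.

Definition rel_error_gain (c Y Z s : R) : R := (c / (c + Z * (1 - s)) + Y) * exp (Y * s).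

Lemma step_rel_error (a p Y Z y z m s : R) : 0 < p -> 0 < Y -> 0 < Z ->
  Y = a * Z / (p + Z) * exp (- Y) -> m <= s -> s < 1 ->
  Rabs (y - Y) <= Y * m -> Rabs (z - Z) <= Z * m ->
  Rabs (a * z / (p + z) * exp (- y) - Y) <= Y * m * rel_error_gain p Y Z s.
Proof.
  intros hp hY hZ hE hms hs hy hz.
  pose proof (rel_error_lower_bound Z z m s hZ hms hz) as hz1.
  assert (hz0 : 0 < p + Z * (1 - s) <= p + z) by nra.
  set (d := y - Y) in *. set (D := exp (- d)).
  pose proof (exp_pos (- d)) as hD0. fold D in hD0.
  assert (hd : Rabs d <= Y * s)
    by (apply Rle_trans with (Y * m); [exact hy | apply Rmult_le_compat_l; lra]).
  assert (hEa : a * exp (- Y) = Y * (p + Z) / Z) by (rewrite hE at 2; field; lra).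
  assert (split_error : a * z / (p + z) * exp (- y) - Y
                        = Y * (p * (z - Z) / (Z * (p + z)) * D + (D - 1))).
  { replace (a * z / (p + z) * exp (- y)) with (a * exp (- Y) * (z * D / (p + z))).
    - rewrite hEa. field. lra.
    - unfold D, d. replace (- y) with (- Y + - (y - Y)) by ring. rewrite exp_plus. field. lra. }
  assert (hD : D <= exp (Y * s)).
  { apply exp_le_compat. pose proof (RRle_abs (- d)) as h. rewrite Rabs_Ropp in h. lra. }
  assert (hD1 : Rabs (D - 1) <= Y * m * exp (Y * s)).
  { eapply Rle_trans; [apply exp_neg_sub1_abs_le|].
    apply Rmult_le_compat; [apply Rabs_pos | left; apply exp_pos | exact hy |].
    apply exp_le_compat, hd. }
  pose proof (hill_rel_error_le p Z z m s hp hZ hms hs hz) as hhill.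
  rewrite split_error, Rabs_mult, (Rabs_right Y) by lra.
  apply Rle_trans with (Y * (p * m / (p + Z * (1 - s)) * exp (Y * s) + Y * m * exp (Y * s))).
  - apply Rmult_le_compat_l; [lra|].
    eapply Rle_trans; [apply Rabs_triang|].
    rewrite Rabs_mult, (Rabs_right D) by lra.
    apply Rplus_le_compat; [|exact hD1].
    apply Rmult_le_compat; [apply Rabs_pos | lra | exact hhill | exact hD].
  - right. unfold rel_error_gain. field. nra.
Qed.

Lemma rel_error_gain_continuous_0 (c Y Z : R) :
  0 < c + Z -> continuity_pt (rel_error_gain c Y Z) 0.
Proof. intros h. unfold rel_error_gain. reg. lra. Qed.

Lemma rel_error_gain_0 (c Y Z : R) : rel_error_gain c Y Z 0 = c / (c + Z) + Y.
Proof. unfold rel_error_gain. rewrite Rmult_0_r, exp_0, Rminus_0_r, !Rmult_1_r. reflexivity. Qed.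

Lemma sol_rel_error_decay (a b p q Y Z s k : R) :
  0 < p -> 0 < q -> 0 < Y -> 0 < Z -> is_equilibrium a b p q Y Z -> s < 1 -> 0 <= k <= 1 ->
  rel_error_gain p Y Z s <= k -> rel_error_gain q Z Y s <= k ->
  forall y0 z0 m, 0 <= m <= s -> Rabs (y0 - Y) <= Y * m -> Rabs (z0 - Z) <= Z * m ->
  forall n, Rabs (fst (sol a b p q y0 z0 n) - Y) <= Y * (m * k ^ n) /\
            Rabs (snd (sol a b p q y0 z0 n) - Z) <= Z * (m * k ^ n).
Proof.
  intros hp hq hY hZ [hE1 hE2] hs hk hgY hgZ y0 z0 m hm hy0 hz0 n.
  induction n as [|n [hy hz]]; [simpl; rewrite !Rmult_1_r; split; assumption|].
  destruct (pow_unit_interval k n hk).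
  assert (hmk0 : 0 <= m * k ^ n) by nra.
  assert (hmk : m * k ^ n <= s) by nra.
  rewrite sol_S_fst, sol_S_snd. simpl pow. split.
  - eapply Rle_trans; [apply (step_rel_error a p Y Z _ _ (m * k ^ n) s); assumption|].
    replace (Y * (m * (k * k ^ n))) with (Y * (m * k ^ n) * k) by ring.
    apply Rmult_le_compat_l; [apply Rmult_le_pos; lra | exact hgY].
  - eapply Rle_trans; [apply (step_rel_error b q Z Y _ _ (m * k ^ n) s); assumption|].
    replace (Z * (m * (k * k ^ n))) with (Z * (m * k ^ n) * k) by ring.
    apply Rmult_le_compat_l; [apply Rmult_le_pos; lra | exact hgZ].
Qed.

Lemma rel_error_gains_contractive (p q Y Z : R) :
  0 < p -> 0 < q -> 0 < Y -> 0 < Z -> p / (p + Z) + Y < 1 -> q / (q + Y) + Z < 1 ->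
  exists s k, 0 < s < 1 /\ 0 <= k < 1 /\
    rel_error_gain p Y Z s <= k /\ rel_error_gain q Z Y s <= k.
Proof.
  intros hp hq hY hZ hgY hgZ.
  pose proof (Rmax_l (p / (p + Z) + Y) (q / (q + Y) + Z)).
  pose proof (Rmax_r (p / (p + Z) + Y) (q / (q + Y) + Z)).
  assert (Rmax (p / (p + Z) + Y) (q / (q + Y) + Z) < 1) by (apply Rmax_lub_lt; lra).
  pose proof (Rdiv_lt_0_compat p (p + Z) hp ltac:(lra)).
  set (k := (1 + Rmax (p / (p + Z) + Y) (q / (q + Y) + Z)) / 2) in *.
  destruct (continuity_pt_lt_nbhd (rel_error_gain p Y Z) 0 k) as [r1 [hr1 near1]].
  { apply rel_error_gain_continuous_0. lra. }
  { rewrite rel_error_gain_0. unfold k. lra. }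
  destruct (continuity_pt_lt_nbhd (rel_error_gain q Z Y) 0 k) as [r2 [hr2 near2]].
  { apply rel_error_gain_continuous_0. lra. }
  { rewrite rel_error_gain_0. unfold k. lra. }
  pose proof (Rmin_l 1 (Rmin r1 r2)). pose proof (Rmin_r 1 (Rmin r1 r2)).
  pose proof (Rmin_l r1 r2). pose proof (Rmin_r r1 r2).
  assert (0 < Rmin 1 (Rmin r1 r2)) by (repeat apply Rmin_pos; lra).
  set (s := Rmin 1 (Rmin r1 r2) / 2).
  assert (hs : Rabs (s - 0) = s) by (rewrite Rminus_0_r; apply Rabs_right; unfold s; lra).
  exists s, k. split; [unfold s; lra|]. split; [unfold k; lra|].
  split; left; [apply near1 | apply near2]; rewrite hs; unfold s; lra.
Qed.

Lemma positive_equilibrium_stable_of_gain (a b p q Y Z : R) :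
  0 < p -> 0 < q -> 0 < Y -> 0 < Z -> is_equilibrium a b p q Y Z ->
  p / (p + Z) + Y < 1 -> q / (q + Y) + Z < 1 ->
  locally_asymptotically_stable a b p q Y Z.
Proof.
  intros hp hq hY hZ hE hgY hgZ.
  destruct (rel_error_gains_contractive p q Y Z) as [s [k [hs [hk [hgain1 hgain2]]]]];
    try assumption.
  pose proof (Rmin_l Y Z). pose proof (Rmin_r Y Z).
  assert (0 < Rmin Y Z) by (apply Rmin_pos; lra).
  set (mu := Rmin Y Z) in *.
  apply (locally_asymptotically_stable_of_geometric_decay _ _ _ _ _ _
           ((Y + Z) / mu) (mu * s) k); [apply Rlt_le, Rdiv_lt_0_compat; lra | nra | lra |].
  intros y0 z0 _ _ hd n. unfold sol_dist.
  set (d := Rabs (y0 - Y) + Rabs (z0 - Z)) in *.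
  pose proof (Rabs_pos (y0 - Y)). pose proof (Rabs_pos (z0 - Z)).
  assert (hmu : d = mu * (d / mu)) by (field; lra).
  assert (hm : 0 <= d / mu <= s).
  { split; [apply Rmult_le_pos; [unfold d; lra | left; apply Rinv_0_lt_compat; lra]|].
    apply Rmult_le_reg_l with mu; [lra|]. rewrite <- hmu. lra. }
  assert (hy0 : Rabs (y0 - Y) <= Y * (d / mu)).
  { apply Rle_trans with d; [unfold d; lra|]. rewrite hmu at 1. apply Rmult_le_compat_r; lra. }
  assert (hz0 : Rabs (z0 - Z) <= Z * (d / mu)).
  { apply Rle_trans with d; [unfold d; lra|]. rewrite hmu at 1. apply Rmult_le_compat_r; lra. }
  destruct (sol_rel_error_decay a b p q Y Z s k hp hq hY hZ hE ltac:(lra) ltac:(lra)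
              hgain1 hgain2 y0 z0 (d / mu) hm hy0 hz0 n) as [hy hz].
  replace ((Y + Z) / mu * d * k ^ n) with (Y * (d / mu * k ^ n) + Z * (d / mu * k ^ n))
    by (field; lra).
  lra.
Qed.

Lemma is_equilibrium_swap (a b p q Y Z : R) :
  is_equilibrium a b p q Y Z -> is_equilibrium b a q p Z Y.
Proof. intros [h1 h2]. split; assumption. Qed.

Lemma hill_system_upper (A B P Q U V : R) :
  0 < A -> 0 < B -> 0 < P -> 0 < Q -> 0 < U -> 0 < V ->
  U * (P + V) <= A * V -> V * (Q + U) <= B * U -> P * Q + (P + B) * U <= A * B.
Proof.
  intros hA hB hP hQ hU hV h1 h2.
  assert (0 < A - U) by nra.
  assert (U * (P * (Q + U)) <= U * (B * (A - U))) by nra.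
  assert (P * (Q + U) <= B * (A - U)) by (apply Rmult_le_reg_l with U; lra).
  nra.
Qed.

Lemma hill_system_lower (A B P Q U V : R) :
  0 < A -> 0 < B -> 0 < P -> 0 < Q -> 0 < U -> 0 < V ->
  A * V <= U * (P + V) -> B * U <= V * (Q + U) -> A * B - P * Q <= (P + B) * U.
Proof.
  intros hA hB hP hQ hU hV h1 h2.
  destruct (Rle_dec A U) as [h | h]; [nra|].
  assert (U * (B * (A - U)) <= U * (P * (Q + U))) by nra.
  assert (B * (A - U) <= P * (Q + U)) by (apply Rmult_le_reg_l with U; lra).
  nra.
Qed.

Lemma equilibrium_fst_eq (a b p q Y Z : R) : 0 < p + Z ->
  is_equilibrium a b p q Y Z -> Y * (p + Z) = a * Z * exp (- Y).
Proof. intros h [hE _]. rewrite hE at 1. field. lra. Qed.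

Lemma equilibrium_fst_le (a b p q Y Z : R) :
  0 < a -> 0 < b -> 0 < p -> 0 < q -> 0 < Y -> 0 < Z -> is_equilibrium a b p q Y Z ->
  Y <= (a * b - p * q) / (p + b).
Proof.
  intros ha hb hp hq hY hZ hE.
  pose proof (equilibrium_fst_eq a b p q Y Z ltac:(lra) hE) as hY'.
  pose proof (equilibrium_fst_eq b a q p Z Y ltac:(lra) (is_equilibrium_swap _ _ _ _ _ _ hE)) as hZ'.
  assert (exp (- Y) <= 1) by (rewrite <- exp_0; apply exp_le_compat; lra).
  assert (exp (- Z) <= 1) by (rewrite <- exp_0; apply exp_le_compat; lra).
  assert (0 < a * Z) by nra. assert (0 < b * Y) by nra.
  pose proof (hill_system_upper a b p q Y Z ha hb hp hq hY hZ
                ltac:(rewrite hY'; nra) ltac:(rewrite hZ'; nra)).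
  apply Rmult_le_reg_r with (p + b); [lra|].
  unfold Rdiv. rewrite Rmult_assoc, Rinv_l, Rmult_1_r by lra. lra.
Qed.

Lemma equilibrium_fst_ge (a b p q Y Z ys zs : R) :
  0 < a -> 0 < b -> 0 < p -> 0 < q -> 0 < Y -> 0 < Z -> is_equilibrium a b p q Y Z ->
  Y <= ys -> Z <= zs -> (a * b * exp (- (ys + zs)) - p * q) / (b * exp (- zs) + p) <= Y.
Proof.
  intros ha hb hp hq hY hZ hE hys hzs.
  pose proof (equilibrium_fst_eq a b p q Y Z ltac:(lra) hE) as hY'.
  pose proof (equilibrium_fst_eq b a q p Z Y ltac:(lra) (is_equilibrium_swap _ _ _ _ _ _ hE)) as hZ'.
  assert (exp (- ys) <= exp (- Y)) by (apply exp_le_compat; lra).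
  assert (exp (- zs) <= exp (- Z)) by (apply exp_le_compat; lra).
  pose proof (exp_pos (- ys)). pose proof (exp_pos (- zs)).
  assert (0 < a * Z) by nra. assert (0 < b * Y) by nra.
  pose proof (hill_system_lower (a * exp (- ys)) (b * exp (- zs)) p q Y Z
                ltac:(nra) ltac:(nra) hp hq hY hZ
                ltac:(rewrite hY'; nra) ltac:(rewrite hZ'; nra)).
  rewrite Ropp_plus_distr, exp_plus.
  apply Rmult_le_reg_r with (b * exp (- zs) + p); [nra|].
  unfold Rdiv. rewrite Rmult_assoc, Rinv_l, Rmult_1_r by nra. nra.
Qed.

Lemma equilibrium_gain_lt_1_of_exp_gt (a b p q Y Z : R) : 0 < p -> 0 < Z ->
  is_equilibrium a b p q Y Z -> a < exp Y -> p / (p + Z) + Y < 1.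
Proof.
  intros hp hZ hE hexp.
  pose proof (equilibrium_fst_eq a b p q Y Z ltac:(lra) hE) as hY.
  assert (a * exp (- Y) < 1).
  { rewrite exp_Ropp. apply Rmult_lt_reg_r with (exp Y); [apply exp_pos|].
    rewrite Rmult_assoc, Rinv_l, Rmult_1_r, Rmult_1_l by (pose proof (exp_pos Y); lra). exact hexp. }
  assert (Y * (p + Z) < Z) by nra.
  apply Rmult_lt_reg_r with (p + Z); [lra|].
  replace ((p / (p + Z) + Y) * (p + Z)) with (p + Y * (p + Z)) by (field; lra). lra.
Qed.

Theorem theorem3p2 (a b p q : R) (ha : 0 < a) (hb : 0 < b) (hp : 0 < p) (hq : 0 < q) :
  (a / p < 1 -> b / q < 1 -> locally_asymptotically_stable a b p q 0 0) /\
  (a * b > p * q ->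
   let ys := (a * b - p * q) / (p + b) in
   let zs := (a * b - p * q) / (q + a) in
   let yl := (a * b * exp (- (ys + zs)) - p * q) / (b * exp (- zs) + p) in
   let zl := (a * b * exp (- (ys + zs)) - p * q) / (a * exp (- ys) + q) in
   exp yl > a -> exp zl > b ->
   forall yb zb, 0 < yb -> 0 < zb -> is_equilibrium a b p q yb zb ->
     locally_asymptotically_stable a b p q yb zb).
Proof.
  split; [apply zero_locally_asymptotically_stable; assumption|].
  (* ab > pq only ensures that a positive equilibrium exists. *)
  intros _ ys zs yl zl hyl hzl yb zb hyb hzb hE.
  pose proof (is_equilibrium_swap _ _ _ _ _ _ hE) as hE'.
  assert (hys : yb <= ys) by (apply (equilibrium_fst_le a b p q yb zb); assumption).
  assert (hzs : zb <= zs).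
  { replace zs with ((b * a - q * p) / (q + a)) by (unfold zs; f_equal; ring).
    apply (equilibrium_fst_le b a q p zb yb); assumption. }
  assert (hyl_le : yl <= yb) by (apply (equilibrium_fst_ge a b p q yb zb); assumption).
  assert (hzl_le : zl <= zb).
  { replace zl with ((b * a * exp (- (zs + ys)) - q * p) / (a * exp (- ys) + q))
      by (unfold zl; rewrite (Rplus_comm zs ys); f_equal; ring).
    apply (equilibrium_fst_ge b a q p zb yb); assumption. }
  apply positive_equilibrium_stable_of_gain; try assumption.
  - apply (equilibrium_gain_lt_1_of_exp_gt a b p q yb zb); try assumption.
    apply Rlt_le_trans with (exp yl); [exact hyl | apply exp_le_compat, hyl_le].
  - apply (equilibrium_gain_lt_1_of_exp_gt b a q p zb yb); try assumption.
    apply Rlt_le_trans with (exp zl); [exact hzl | apply exp_le_compat, hzl_le].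
Qed.
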